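(* Let $f:U\to\mathbb{R}^3$ be a Guichard net and $\hat f$ an associated system of $f$ given by $d\hat f=\sum_{m=1}^3h_m\partial_mf\,dx_m$. Then, for each $i\in\{1,2,3\}$, the coordinate surfaces $x_i=\mathrm{const}$ of $f$ are totally umbilic if and only if $\partial_ih_i=0$.
   Context: $U\subset\mathbb{R}^3$ open connected, coordinates $(x_1,x_2,x_3)=(x,y,z)$, $\partial_i=\partial_{x_i}$. A triply orthogonal system is $f:U\to\mathbb{R}^3$ with $\det(\partial_1f,\partial_2f,\partial_3f)\ne0$ and $(\partial_if,\partial_jf)=0$ for $i\ne j$. For $(i,j,k)$ cyclic, $N_i=\partial_jf\times\partial_kf/|\cdot|$, Lamé coefficients $H_i$ by $\partial_if=H_iN_i$, rotational coefficients $\beta_{ij}=\frac1{H_i}\partial_iH_j$, and $\kappa_{ij}=-\beta_{ij}/H_j$ (principal curvature of $x_i=\mathrm{const}$ along $x_j$-lines); the surfaces $x_i=\mathrm{const}$ are totally umbilic if $\kappa_{ij}=\kappa_{ik}$. A Guichard net satisfies $H_1^2+H_2^2-H_3^2=0$. Its associated systems are $\hat f$ with $d\hat f=\sum h_m\partial_mf\,dx_m$, where $(h_1,h_2,h_3)$ solves $\partial_xh_3=-\frac{H_2}{H_3}\kappa_{13}$, $\partial_yh_3=\frac{H_1}{H_3}\kappa_{23}$, $\partial_zh_3=-\frac{H_1H_2}{H_3^2}(\kappa_{31}-\kappa_{32})$, $h_1=h_3+\frac{H_2}{H_1H_3}$, $h_2=h_3-\frac{H_1}{H_2H_3}$. 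*)

From Stdlib Require Import Reals List.
From Coquelicot Require Import Coquelicot.
Open Scope R_scope.

Inductive idx := I1 | I2 | I3.
Definition nxt (i : idx) : idx :=
  match i with I1 => I2 | I2 => I3 | I3 => I1 end.

Definition R3 := (R * R * R)%type.
Definition crd (i : idx) (p : R3) : R :=
  match i with I1 => fst (fst p) | I2 => snd (fst p) | I3 => snd p end.
Definition upd (i : idx) (p : R3) (t : R) : R3 :=
  match i with
  | I1 => (t, snd (fst p), snd p)
  | I2 => (fst (fst p), t, snd p)
  | I3 => (fst (fst p), snd (fst p), t)
  end.

Definition dot (a b : R3) : R :=
  crd I1 a * crd I1 b + crd I2 a * crd I2 b + crd I3 a * crd I3 b.
Definition cross (a b : R3) : R3 :=
  (crd I2 a * crd I3 b - crd I3 a * crd I2 b,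
   crd I3 a * crd I1 b - crd I1 a * crd I3 b,
   crd I1 a * crd I2 b - crd I2 a * crd I1 b).
Definition scal (c : R) (a : R3) : R3 :=
  (c * crd I1 a, c * crd I2 a, c * crd I3 a).
Definition norm3 (a : R3) : R := sqrt (dot a a).
Definition det3 (a b c : R3) : R := dot a (cross b c).

Definition pdiff (i : idx) (g : R3 -> R) (p : R3) : Prop :=
  ex_derive (fun t => g (upd i p t)) (crd i p).
Definition pd (i : idx) (g : R3 -> R) (p : R3) : R :=
  Derive (fun t => g (upd i p t)) (crd i p).
Definition comp (F : R3 -> R3) (m : idx) : R3 -> R := fun q => crd m (F q).
Definition vpd (i : idx) (F : R3 -> R3) (p : R3) : R3 :=
  (pd i (comp F I1) p, pd i (comp F I2) p, pd i (comp F I3) p).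

Fixpoint iter_pd (l : list idx) (g : R3 -> R) : R3 -> R :=
  match l with nil => g | i :: l' => pd i (iter_pd l' g) end.
Definition smooth_on (U : R3 -> Prop) (g : R3 -> R) : Prop :=
  forall (l : list idx) (i : idx) (p : R3), U p -> pdiff i (iter_pd l g) p.
Definition vsmooth_on (U : R3 -> Prop) (F : R3 -> R3) : Prop :=
  forall m, smooth_on U (comp F m).

Definition open3 (U : R3 -> Prop) : Prop :=
  forall p, U p -> exists e, 0 < e /\
    forall q, (forall i, Rabs (crd i q - crd i p) < e) -> U q.
Definition connected3 (U : R3 -> Prop) : Prop :=
  (exists p, U p) /\
  forall A B : R3 -> Prop, open3 A -> open3 B ->
    (forall p, U p -> A p \/ B p) ->
    (forall p, U p -> ~ (A p /\ B p)) ->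
    (forall p, U p -> A p) \/ (forall p, U p -> B p).

Definition triply_orthogonal (U : R3 -> Prop) (f : R3 -> R3) : Prop :=
  vsmooth_on U f /\
  forall p, U p ->
    det3 (vpd I1 f p) (vpd I2 f p) (vpd I3 f p) <> 0 /\
    forall i j, i <> j -> dot (vpd i f p) (vpd j f p) = 0.

Definition Nvec (f : R3 -> R3) (i : idx) (p : R3) : R3 :=
  let c := cross (vpd (nxt i) f p) (vpd (nxt (nxt i)) f p) in
  scal (/ norm3 c) c.
(** Lamé coefficient H_i : the scalar with ∂_i f = H_i N_i
    (N_i is a unit vector parallel to ∂_i f, so H_i = (∂_i f, N_i)). *)
Definition Lame (f : R3 -> R3) (i : idx) (p : R3) : R :=
  dot (vpd i f p) (Nvec f i p).
Definition beta (f : R3 -> R3) (i j : idx) (p : R3) : R :=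
  / Lame f i p * pd i (Lame f j) p.
Definition kappa (f : R3 -> R3) (i j : idx) (p : R3) : R :=
  - beta f i j p / Lame f j p.

Definition totally_umbilic (U : R3 -> Prop) (f : R3 -> R3) (i : idx) : Prop :=
  forall p, U p -> kappa f i (nxt i) p = kappa f i (nxt (nxt i)) p.

Definition guichard_net (U : R3 -> Prop) (f : R3 -> R3) : Prop :=
  triply_orthogonal U f /\
  forall p, U p ->
    (Lame f I1 p)^2 + (Lame f I2 p)^2 - (Lame f I3 p)^2 = 0.

Definition hsel (h1 h2 h3 : R3 -> R) (m : idx) : R3 -> R :=
  match m with I1 => h1 | I2 => h2 | I3 => h3 end.

Definition associated_system (U : R3 -> Prop) (f fhat : R3 -> R3)
    (h1 h2 h3 : R3 -> R) : Prop :=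
  (forall m p, U p -> pdiff m h3 p) /\
  (forall m n p, U p -> pdiff m (comp fhat n) p) /\
  forall p, U p ->
    let H1 := Lame f I1 p in let H2 := Lame f I2 p in let H3 := Lame f I3 p in
    (forall m, vpd m fhat p = scal (hsel h1 h2 h3 m p) (vpd m f p)) /\
    pd I1 h3 p = - (H2 / H3) * kappa f I1 I3 p /\
    pd I2 h3 p = (H1 / H3) * kappa f I2 I3 p /\
    pd I3 h3 p = - (H1 * H2 / H3 ^ 2) * (kappa f I3 I1 p - kappa f I3 I2 p) /\
    h1 p = h3 p + H2 / (H1 * H3) /\
    h2 p = h3 p - H1 / (H2 * H3).

From Pilot Require Import Defs.
From Stdlib Require Import Reals Lra.
From Coquelicot Require Import Coquelicot.
Open Scope R_scope.

(* For distinct i, j, k the difference kappa_ij - kappa_ik equals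
   (H_j ∂_iH_k - H_k ∂_iH_j) / (H_i H_j H_k).  Differentiating
   h_1 = h_3 + H_2 / (H_1 H_3) along x_1 and inserting the prescribed ∂_1h_3,
   the kappa-terms cancel and ∂_1h_1 = (H_1 ∂_1H_2 - H_2 ∂_1H_1) / (H_1^2 H_3).
   The Guichard condition H_1^2 + H_2^2 = H_3^2 and its derivative
   H_1 ∂_1H_1 + H_2 ∂_1H_2 = H_3 ∂_1H_3 give
     H_3 (H_3 ∂_1H_2 - H_2 ∂_1H_3) = H_1 (H_1 ∂_1H_2 - H_2 ∂_1H_1),
   so both numerators vanish together.  The case x_2 is symmetric, and for x_3
   the prescribed ∂_3h_3 is already a nonzero multiple of kappa_31 - kappa_32. *)

Lemma Rdiv_eq_0_iff x y : y <> 0 -> x / y = 0 <-> x = 0.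
Proof.
  intros Hy; split; intros H.
  - replace x with (x / y * y) by (field; exact Hy). rewrite H; ring.
  - rewrite H; apply Rdiv_0_l.
Qed.

Lemma upd_crd i p : upd i p (crd i p) = p.
Proof. destruct p as [[a b] c]; destruct i; reflexivity. Qed.

Lemma locally_upd_open U i p :
  open3 U -> U p -> locally (crd i p) (fun t => U (upd i p t)).
Proof.
  intros HU Hp. destruct (HU p Hp) as [e [He Hball]].
  exists (mkposreal e He). intros t Ht. apply Hball. intros k.
  change (Rabs (t - crd i p) < e) in Ht.
  destruct p as [[a b] c]; destruct i, k; simpl in *; try exact Ht;
    rewrite Rminus_diag, Rabs_R0; exact He.
Qed.

Lemma pd_ext_on U i (g k : R3 -> R) p :
  open3 U -> U p -> (forall q, U q -> g q = k q) -> pd i g p = pd i k p.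
Proof.
  intros HU Hp Hgk. apply Derive_ext_loc.
  apply (filter_imp (fun t => U (upd i p t))); [|exact (locally_upd_open U i p HU Hp)].
  intros t Ht. exact (Hgk _ Ht).
Qed.

Lemma Derive_null_cone (A B C : R -> R) x :
  ex_derive A x -> ex_derive B x -> ex_derive C x ->
  locally x (fun t => A t ^ 2 + B t ^ 2 - C t ^ 2 = 0) ->
  A x * Derive A x + B x * Derive B x - C x * Derive C x = 0.
Proof.
  intros HA HB HC Hcone.
  pose (G := fun t => A t ^ 2 + B t ^ 2 - C t ^ 2).
  assert (HG0 : Derive G x = 0).
  { rewrite <- (Derive_const 0 x). exact (Derive_ext_loc _ _ x Hcone). }
  assert (HG : is_derive G x
                 (2 * (A x * Derive A x + B x * Derive B x - C x * Derive C x))).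
  { unfold G; auto_derive; [tauto|].
    change (fun t : R => A t) with A; change (fun t : R => B t) with B;
    change (fun t : R => C t) with C. ring. }
  rewrite (is_derive_unique _ _ _ HG) in HG0. lra.
Qed.

Lemma pd_null_cone U i (a b c : R3 -> R) p :
  open3 U -> U p -> pdiff i a p -> pdiff i b p -> pdiff i c p ->
  (forall q, U q -> a q ^ 2 + b q ^ 2 - c q ^ 2 = 0) ->
  a p * pd i a p + b p * pd i b p - c p * pd i c p = 0.
Proof.
  intros HU Hp Ha Hb Hc Hcone.
  pose proof (Derive_null_cone _ _ _ _ Ha Hb Hc) as H.
  cbv beta in H. rewrite upd_crd in H. apply H.
  apply (filter_imp (fun t => U (upd i p t))); [|exact (locally_upd_open U i p HU Hp)].
  intros t Ht. exact (Hcone _ Ht).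
Qed.

Lemma Derive_plus_scal_div_mul (A B C D : R -> R) s x :
  ex_derive A x -> ex_derive B x -> ex_derive C x -> ex_derive D x ->
  B x <> 0 -> C x <> 0 ->
  Derive (fun t => D t + s * (A t / (B t * C t))) x =
  Derive D x + s * ((Derive A x * B x * C x
                     - A x * (Derive B x * C x + B x * Derive C x)) / (B x * C x) ^ 2).
Proof.
  intros HA HB HC HD HB0 HC0.
  apply is_derive_unique. auto_derive.
  - repeat split; auto.
  - change (fun t : R => A t) with A; change (fun t : R => B t) with B;
    change (fun t : R => C t) with C; change (fun t : R => D t) with D.
    field; auto.
Qed.

Lemma pd_plus_scal_div_mul i (a b c d : R3 -> R) s p :
  pdiff i a p -> pdiff i b p -> pdiff i c p -> pdiff i d p ->
  b p <> 0 -> c p <> 0 ->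
  pd i (fun q => d q + s * (a q / (b q * c q))) p =
  pd i d p + s * ((pd i a p * b p * c p
                   - a p * (pd i b p * c p + b p * pd i c p)) / (b p * c p) ^ 2).
Proof.
  intros Ha Hb Hc Hd Hb0 Hc0.
  rewrite <- (upd_crd i p) in Hb0, Hc0.
  pose proof (Derive_plus_scal_div_mul _ _ _ _ s _ Ha Hb Hc Hd Hb0 Hc0) as H.
  cbv beta in H. rewrite upd_crd in H. exact H.
Qed.

Lemma ex_derive_dot (a c : R -> R3) x :
  (forall m, ex_derive (fun t => crd m (a t)) x) ->
  (forall m, ex_derive (fun t => crd m (c t)) x) ->
  ex_derive (fun t => dot (a t) (c t)) x.
Proof.
  intros Ha Hc. unfold dot.
  apply @ex_derive_plus; [apply @ex_derive_plus|]; apply @ex_derive_mult; auto.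
Qed.

Lemma ex_derive_cross (a c : R -> R3) x :
  (forall m, ex_derive (fun t => crd m (a t)) x) ->
  (forall m, ex_derive (fun t => crd m (c t)) x) ->
  forall m, ex_derive (fun t => crd m (cross (a t) (c t))) x.
Proof.
  intros Ha Hc m.
  pose proof (Ha I1); pose proof (Ha I2); pose proof (Ha I3).
  pose proof (Hc I1); pose proof (Hc I2); pose proof (Hc I3).
  destruct m; simpl in *; apply @ex_derive_minus; apply @ex_derive_mult; auto.
Qed.

(* Coquelicot exports its own [scal]. *)
Lemma dot_scal a r c : dot a (Defs.scal r c) = r * dot a c.
Proof. unfold dot, Defs.scal; simpl; ring. Qed.

Lemma det3_cyclic (F : idx -> R3) j :
  dot (F j) (cross (F (nxt j)) (F (nxt (nxt j)))) = det3 (F I1) (F I2) (F I3).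
Proof.
  unfold det3, dot, cross.
  destruct j; simpl; ring.
Qed.

Lemma dot_self_pos a c : dot a c <> 0 -> 0 < dot c c.
Proof.
  intros Hac. apply Rnot_le_lt; intros Hle. apply Hac.
  destruct c as [[x y] z]. unfold dot in *; simpl in *.
  assert (x = 0) by nra. assert (y = 0) by nra. assert (z = 0) by nra.
  subst; ring.
Qed.

Lemma ex_derive_div_sqrt (u v : R -> R) x :
  ex_derive u x -> ex_derive v x -> 0 < v x ->
  ex_derive (fun t => u t / sqrt (v t)) x.
Proof.
  intros Hu Hv Hpos. auto_derive. repeat split; auto.
  apply Rgt_not_eq, sqrt_lt_R0, Hpos.
Qed.

Lemma Lame_eq_dot_div f j p :
  let c := cross (vpd (nxt j) f p) (vpd (nxt (nxt j)) f p) in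
  Lame f j p = dot (vpd j f p) c / norm3 c.
Proof. unfold Lame, Nvec; cbv zeta. rewrite dot_scal. unfold Rdiv; ring. Qed.

Section LameCoefficients.

Variables (U : R3 -> Prop) (f : R3 -> R3).
Hypothesis Htriply : triply_orthogonal U f.

Lemma dot_vpd_cross_neq0 j p : U p ->
  dot (vpd j f p) (cross (vpd (nxt j) f p) (vpd (nxt (nxt j)) f p)) <> 0.
Proof.
  intros Hp. pose proof (det3_cyclic (fun k => vpd k f p) j) as Hcyc.
  cbv beta in Hcyc. rewrite Hcyc. exact (proj1 (proj2 Htriply p Hp)).
Qed.

Lemma Lame_neq0 j p : U p -> Lame f j p <> 0.
Proof.
  intros Hp. pose proof (dot_vpd_cross_neq0 j p Hp) as Hdot.
  rewrite Lame_eq_dot_div. unfold norm3, Rdiv.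
  apply Rmult_integral_contrapositive_currified; [exact Hdot|].
  apply Rinv_neq_0_compat, Rgt_not_eq, sqrt_lt_R0, (dot_self_pos _ _ Hdot).
Qed.

Lemma pdiff_Lame i j p : U p -> pdiff i (Lame f j) p.
Proof.
  intros Hp.
  set (a := fun k t => vpd k f (upd i p t)).
  set (c := fun t => cross (a (nxt j) t) (a (nxt (nxt j)) t)).
  assert (Ha : forall k m, ex_derive (fun t => crd m (a k t)) (crd i p)).
  { intros k m. destruct m; exact (proj1 Htriply _ (cons k nil) i p Hp). }
  assert (Hc : forall m, ex_derive (fun t => crd m (c t)) (crd i p))
    by (apply ex_derive_cross; auto).
  unfold pdiff.
  apply (ex_derive_ext (fun t => dot (a j t) (c t) / sqrt (dot (c t) (c t)))).
  { intros t. symmetry. apply Lame_eq_dot_div. }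
  apply ex_derive_div_sqrt; try (apply ex_derive_dot; auto).
  apply (dot_self_pos (a j (crd i p))).
  unfold c, a. rewrite upd_crd. exact (dot_vpd_cross_neq0 j p Hp).
Qed.

End LameCoefficients.

Lemma kappa_sub f i j k p :
  Lame f i p <> 0 -> Lame f j p <> 0 -> Lame f k p <> 0 ->
  kappa f i j p - kappa f i k p =
  (Lame f j p * pd i (Lame f k) p - Lame f k p * pd i (Lame f j) p)
    / (Lame f i p * Lame f j p * Lame f k p).
Proof. intros Hi Hj Hk. unfold kappa, beta. field; auto. Qed.

Lemma kappa_eq_iff f i j k p :
  Lame f i p <> 0 -> Lame f j p <> 0 -> Lame f k p <> 0 ->
  kappa f i j p = kappa f i k p <->
  Lame f k p * pd i (Lame f j) p - Lame f j p * pd i (Lame f k) p = 0.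
Proof.
  intros Hi Hj Hk.
  rewrite <- (Rdiv_eq_0_iff _ (Lame f i p * Lame f j p * Lame f k p))
    by (repeat apply Rmult_integral_contrapositive_currified; auto).
  pose proof (kappa_sub f i j k p Hi Hj Hk) as Hsub.
  split; intros H; unfold Rdiv in *; lra.
Qed.

Lemma null_cone_iff a b c da db dc :
  a <> 0 -> c <> 0 ->
  a ^ 2 + b ^ 2 - c ^ 2 = 0 -> a * da + b * db - c * dc = 0 ->
  c * db - b * dc = 0 <-> a * db - b * da = 0.
Proof.
  intros Ha Hc Hcone Hdcone.
  assert (Hid : c * (c * db - b * dc) = a * (a * db - b * da)).
  { transitivity (a * (a * db - b * da) - db * (a ^ 2 + b ^ 2 - c ^ 2)
                  + b * (a * da + b * db - c * dc)); [ring|].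
    rewrite Hcone, Hdcone. ring. }
  split; intros H.
  - rewrite H, Rmult_0_r in Hid.
    destruct (Rmult_integral _ _ (eq_sym Hid)); [contradiction | assumption].
  - rewrite H, Rmult_0_r in Hid.
    destruct (Rmult_integral _ _ Hid); [contradiction | assumption].
Qed.

Section GuichardAssociated.

Variables (U : R3 -> Prop) (f fhat : R3 -> R3) (h1 h2 h3 : R3 -> R).
Hypotheses (HU : open3 U) (Hguichard : guichard_net U f)
  (Hassoc : associated_system U f fhat h1 h2 h3).

Let Lame_neq0_on : forall j p, U p -> Lame f j p <> 0 :=
  Lame_neq0 U f (proj1 Hguichard).
Let pdiff_Lame_on : forall i j p, U p -> pdiff i (Lame f j) p :=
  pdiff_Lame U f (proj1 Hguichard).

Lemma pd_Lame_null_cone i p : U p ->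
  Lame f I1 p * pd i (Lame f I1) p + Lame f I2 p * pd i (Lame f I2) p
  - Lame f I3 p * pd i (Lame f I3) p = 0.
Proof.
  intros Hp.
  apply (pd_null_cone U); auto.
  exact (proj2 Hguichard).
Qed.

Lemma pd_h1 p : U p ->
  pd I1 h1 p =
  (Lame f I1 p * pd I1 (Lame f I2) p - Lame f I2 p * pd I1 (Lame f I1) p)
    / (Lame f I1 p ^ 2 * Lame f I3 p).
Proof.
  intros Hp. destruct Hassoc as (Hh3 & _ & Hsys).
  rewrite (pd_ext_on U I1 h1
             (fun q => h3 q + 1 * (Lame f I2 q / (Lame f I1 q * Lame f I3 q))) p HU Hp).
  2: { intros q Hq. rewrite Rmult_1_l. apply (Hsys q Hq). }
  rewrite pd_plus_scal_div_mul by auto.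
  destruct (Hsys p Hp) as (_ & Hd1 & _). rewrite Hd1.
  unfold kappa, beta. field. auto.
Qed.

Lemma pd_h2 p : U p ->
  pd I2 h2 p =
  (Lame f I1 p * pd I2 (Lame f I2) p - Lame f I2 p * pd I2 (Lame f I1) p)
    / (Lame f I2 p ^ 2 * Lame f I3 p).
Proof.
  intros Hp. destruct Hassoc as (Hh3 & _ & Hsys).
  rewrite (pd_ext_on U I2 h2
             (fun q => h3 q + -1 * (Lame f I1 q / (Lame f I2 q * Lame f I3 q))) p HU Hp).
  2: { intros q Hq. destruct (Hsys q Hq) as (_ & _ & _ & _ & _ & Hq2). rewrite Hq2. ring. }
  rewrite pd_plus_scal_div_mul by auto.
  destruct (Hsys p Hp) as (_ & _ & Hd2 & _). rewrite Hd2.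
  unfold kappa, beta. field. auto.
Qed.

Lemma umbilic1_at_iff p : U p ->
  kappa f I1 I2 p = kappa f I1 I3 p <-> pd I1 h1 p = 0.
Proof.
  intros Hp.
  pose proof (Lame_neq0_on I1 p Hp). pose proof (Lame_neq0_on I3 p Hp).
  rewrite kappa_eq_iff, pd_h1, Rdiv_eq_0_iff
    by auto using pow_nonzero, Rmult_integral_contrapositive_currified.
  apply null_cone_iff; auto.
  - exact (proj2 Hguichard p Hp).
  - exact (pd_Lame_null_cone I1 p Hp).
Qed.

Lemma umbilic2_at_iff p : U p ->
  kappa f I2 I3 p = kappa f I2 I1 p <-> pd I2 h2 p = 0.
Proof.
  intros Hp.
  pose proof (Lame_neq0_on I2 p Hp) as H2. pose proof (Lame_neq0_on I3 p Hp) as H3.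
  pose proof (proj2 Hguichard p Hp) as Hcone.
  pose proof (pd_Lame_null_cone I2 p Hp) as Hdcone.
  rewrite kappa_eq_iff, pd_h2, Rdiv_eq_0_iff
    by auto using pow_nonzero, Rmult_integral_contrapositive_currified.
  destruct (null_cone_iff (Lame f I2 p) (Lame f I1 p) (Lame f I3 p)
              (pd I2 (Lame f I2) p) (pd I2 (Lame f I1) p) (pd I2 (Lame f I3) p)
              H2 H3 ltac:(lra) ltac:(lra)) as [Hto Hfrom].
  split; intros H; [pose proof (Hto ltac:(lra)) | pose proof (Hfrom ltac:(lra))]; lra.
Qed.

Lemma umbilic3_at_iff p : U p ->
  kappa f I3 I1 p = kappa f I3 I2 p <-> pd I3 h3 p = 0.
Proof.
  intros Hp.
  destruct (proj2 (proj2 Hassoc) p Hp) as (_ & _ & _ & Hd3 & _). rewrite Hd3.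
  assert (Hcoef : - (Lame f I1 p * Lame f I2 p / Lame f I3 p ^ 2) <> 0).
  { apply Ropp_neq_0_compat. unfold Rdiv.
    repeat apply Rmult_integral_contrapositive_currified; auto.
    apply Rinv_neq_0_compat, pow_nonzero; auto. }
  split; intros H.
  - rewrite H. ring.
  - destruct (Rmult_integral _ _ H); [contradiction | lra].
Qed.

End GuichardAssociated.

Theorem corollary4p6 (U : R3 -> Prop) (f fhat : R3 -> R3) (h1 h2 h3 : R3 -> R) :
  open3 U -> connected3 U ->
  guichard_net U f ->
  associated_system U f fhat h1 h2 h3 ->
  forall i : idx,
    totally_umbilic U f i <->
    (forall p, U p -> pd i (hsel h1 h2 h3 i) p = 0).
Proof.
  intros HU _ Hguichard Hassoc i.
  assert (Hpointwise : forall p, U p ->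
            kappa f i (nxt i) p = kappa f i (nxt (nxt i)) p <-> pd i (hsel h1 h2 h3 i) p = 0).
  { intros p Hp. destruct i; cbn [nxt hsel].
    - exact (umbilic1_at_iff U f fhat h1 h2 h3 HU Hguichard Hassoc p Hp).
    - exact (umbilic2_at_iff U f fhat h1 h2 h3 HU Hguichard Hassoc p Hp).
    - exact (umbilic3_at_iff U f fhat h1 h2 h3 Hguichard Hassoc p Hp). }
  split; intros H p Hp; apply (Hpointwise p Hp); exact (H p Hp).
Qed.
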